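(* Let $R$ be a ring, $A$ an $R$-algebra, $I$ an ideal of $A$, and $f:A\to A'$ a homomorphism of $R$-algebras such that $A'$ is $I$-adically complete and separated and $A/I^n\to A'/I^nA'$ is étale for every $n\ge1$. Let $\alpha\in A$ be $I$-adically nilpotent and $\alpha'=f(\alpha)$. Then for every $\alpha$-derivation $\partial$ of $A$ over $R$ there exists a unique $\alpha'$-derivation $\partial'$ of $A'$ over $R$ with $\partial'\circ f=f\circ\partial$.
   Context: For a ring $R$, an $R$-algebra $A$ and $\alpha\in A$, an $\alpha$-derivation of $A$ over $R$ is an $R$-linear map $\partial:A\to A$ with $\partial(1)=0$ and $\partial(xy)=\partial(x)y+x\partial(y)+\alpha\partial(x)\partial(y)$ for all $x,y\in A$. *)

From HB Require Import structures.
From mathcomp Require Import all_boot all_order all_algebra.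
From mathcomp Require Import mpoly.
Set Implicit Arguments. Unset Strict Implicit. Unset Printing Implicit Defensive.
Import Order.TTheory GRing.Theory Num.Theory.
Local Open Scope ring_scope.

Definition is_ideal (A : comNzRingType) (I : A -> Prop) : Prop :=
  [/\ I 0, (forall x y, I x -> I y -> I (x + y)) & (forall a x, I x -> I (a * x))].

Fixpoint ideal_pow (A : comNzRingType) (I : A -> Prop) (n : nat) : A -> Prop :=
  match n with
  | 0 => fun _ => True
  | n'.+1 => fun x => exists s : seq (A * A),
      (forall p, p \in s -> ideal_pow I n' p.1 /\ I p.2) /\
      x = \sum_(p <- s) p.1 * p.2
  end.

Definition ext_ideal (A A' : comNzRingType) (f : A -> A') (J : A -> Prop) : A' -> Prop :=
  fun y => exists s : seq (A * A'),
    (forall p, p \in s -> J p.1) /\ y = \sum_(p <- s) f p.1 * p.2.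

Definition adically_separated (A A' : comNzRingType) (f : A -> A') (I : A -> Prop) : Prop :=
  forall y : A', (forall n, ext_ideal f (ideal_pow I n) y) -> y = 0.

Definition adically_complete (A A' : comNzRingType) (f : A -> A') (I : A -> Prop) : Prop :=
  forall x : nat -> A', (forall n, ext_ideal f (ideal_pow I n) (x n.+1 - x n)) ->
    exists y : A', forall n, ext_ideal f (ideal_pow I n) (y - x n).

Definition adically_nilpotent (A : comNzRingType) (I : A -> Prop) (alpha : A) : Prop :=
  forall m, exists k, ideal_pow I m (alpha ^+ k).

(* Ring maps out of A/I^n
   (resp. A'/I^nA') are ring maps out of A (resp. A') killing I^n (resp. I^nA'). *)
Definition formally_etale_mod (A A' : comNzRingType) (f : {rmorphism A -> A'})
    (I : A -> Prop) (n : nat) : Prop :=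
  forall (C D : comPzRingType) (pi : {rmorphism C -> D}),
    (forall d, exists c, pi c = d) ->
    (forall c c', pi c = 0 -> pi c' = 0 -> c * c' = 0) ->
    forall (u : {rmorphism A -> C}) (v : {rmorphism A' -> D}),
      (forall a, ideal_pow I n a -> u a = 0) ->
      (forall y, ext_ideal f (ideal_pow I n) y -> v y = 0) ->
      (forall a, pi (u a) = v (f a)) ->
      exists w : {rmorphism A' -> C},
        [/\ (forall y, ext_ideal f (ideal_pow I n) y -> w y = 0),
            (forall y, pi (w y) = v y),
            (forall a, w (f a) = u a) &
            (forall w' : {rmorphism A' -> C},
               (forall y, ext_ideal f (ideal_pow I n) y -> w' y = 0) ->
               (forall y, pi (w' y) = v y) ->
               (forall a, w' (f a) = u a) -> forall y, w' y = w y)].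

(* A'/I^nA' is a finitely presented A/I^n-algebra: there are t_1..t_k in A' and
   P_1..P_m in A[x_1..x_k] such that (A/I^n)[x]/(P) ~= A'/I^nA' via x_i |-> t_i,
   i.e. the evaluation A[x] -> A'/I^nA' is onto with kernel (P) + I^n A[x]. *)
Definition finitely_presented_mod (A A' : comNzRingType) (f : {rmorphism A -> A'})
    (I : A -> Prop) (n : nat) : Prop :=
  exists (k : nat) (t : 'I_k -> A') (m : nat) (P : 'I_m -> {mpoly A[k]}),
    (forall y : A', exists Q : {mpoly A[k]},
        ext_ideal f (ideal_pow I n) (y - mmap f t Q)) /\
    (forall Q : {mpoly A[k]},
        ext_ideal f (ideal_pow I n) (mmap f t Q) <->
        exists (G : 'I_m -> {mpoly A[k]}) (H : {mpoly A[k]}),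
          (forall mm, ideal_pow I n (H@_mm)) /\ Q = \sum_(j < m) G j * P j + H).

Definition etale_mod (A A' : comNzRingType) (f : {rmorphism A -> A'})
    (I : A -> Prop) (n : nat) : Prop :=
  formally_etale_mod f I n /\ finitely_presented_mod f I n.

Definition is_alpha_derivation (R : comPzRingType) (A : comAlgType R) (alpha : A)
    (d : A -> A) : Prop :=
  [/\ (forall (r : R) (x y : A), d (r *: x + y) = r *: d x + d y),
      d 1 = 0 &
      (forall x y : A, d (x * y) = d x * y + x * d y + alpha * d x * d y)].

From HB Require Import structures.
From mathcomp Require Import all_boot all_order all_algebra.
From mathcomp Require Import ring.
From Stdlib Require Import ClassicalEpsilon FunctionalExtensionality PropExtensionality.
Set Implicit Arguments. Unset Strict Implicit. Unset Printing Implicit Defensive.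
Import GRing.Theory.
Local Open Scope ring_scope.

(* An alpha-derivation d of A is the same thing as a ring map
   A -> A[eps]/(eps^2 - alpha eps), x |-> x + d(x) eps.  Fix n and put
   M_j = I^n A' + alpha'^j A'.  The rings C_j = A'[eps]/(I^n A' + M_j eps)
   form a tower of square-zero extensions C_(j+1) -> C_j, and x |-> x + d(x) eps
   induces maps A -> C_j killing I^(n+j), because d(I^(m+j)) lies in
   I^m + alpha^j A.  Formal etaleness of A/I^(n+j+1) -> A'/I^(n+j+1)A' therefore
   lifts, uniquely, an alpha'-derivation of A' extending d modulo M_j to one
   modulo M_(j+1).  Since alpha is I-adically nilpotent, M_j = I^n A' for j
   large, so d extends uniquely modulo I^n A' for every n; these extensions are
   compatible, and completeness and separatedness of A' produce the unique
   limit. *)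

(** * Prop-valued ideals and quotient rings *)

(* MathComp's [ring_quotient] only handles decidable proper ideals; the
   quotients below are built classically and may well be zero rings. *)
Record ideal (B : comPzRingType) := Ideal {
  ideal_mem :> B -> Prop;
  ideal0 : ideal_mem 0;
  idealD : forall x y, ideal_mem x -> ideal_mem y -> ideal_mem (x + y);
  idealMl : forall a x, ideal_mem x -> ideal_mem (a * x) }.

Section IdealTheory.
Variables (B : comPzRingType) (K : ideal B).

Lemma idealMr a x : K x -> K (x * a).
Proof. by rewrite mulrC; apply: idealMl. Qed.

Lemma idealN x : K x -> K (- x).
Proof. by rewrite -mulN1r; apply: idealMl. Qed.

Lemma idealB x y : K x -> K y -> K (x - y).
Proof. by move=> Kx Ky; apply: idealD => //; apply: idealN. Qed.

Lemma ideal_sum (T : eqType) (s : seq T) (F : T -> B) :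
  (forall p, p \in s -> K (F p)) -> K (\sum_(p <- s) F p).
Proof.
by move=> KF; rewrite big_seq; apply: big_ind => //; [apply: ideal0 | apply: idealD].
Qed.

End IdealTheory.

(* A coset is represented by an element chosen with [epsilon], so that the
   quotient is a subtype of [B]. *)
Definition coset_rep (B : comPzRingType) (K : ideal B) (x : B) : B :=
  epsilon (inhabits 0) (fun z => K (x - z)).

Section Quotient.
Variables (B : comPzRingType) (K : ideal B).

Lemma coset_repP x : K (x - coset_rep K x).
Proof.
apply: (epsilon_spec (inhabits 0) (fun z => K (x - z))).
by exists x; rewrite subrr; apply: ideal0.
Qed.

Lemma coset_rep_eq x y : K (x - y) -> coset_rep K x = coset_rep K y.
Proof.
move=> Kxy; rewrite /coset_rep; congr epsilon; apply: functional_extensionality => z.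
apply: propositional_extensionality; split => Kz.
- have -> : y - z = (x - z) - (x - y) by ring.
  exact: idealB.
- have -> : x - z = (x - y) + (y - z) by ring.
  exact: idealD.
Qed.

Lemma coset_rep_idem x : coset_rep K (coset_rep K x) == coset_rep K x.
Proof. by apply/eqP/coset_rep_eq; rewrite -opprB; apply/idealN/coset_repP. Qed.

Definition quot := {x : B | coset_rep K x == x}.
HB.instance Definition _ := Choice.on quot.

Let pi (x : B) : quot := exist _ (coset_rep K x) (coset_rep_idem x).

Let pi_val (a : quot) : pi (val a) = a.
Proof. by apply: val_inj => /=; apply/eqP; case: a. Qed.

Let pi_eqP x y : pi x = pi y <-> K (x - y).
Proof.
split=> [/(congr1 val) /= exy | Kxy]; last exact/val_inj/coset_rep_eq.
have -> : x - y = (x - coset_rep K x) - (y - coset_rep K y) by rewrite exy; ring.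
by apply: idealB; apply: coset_repP.
Qed.

Let pi_val_sub x : K (val (pi x) - x).
Proof. by rewrite -opprB; apply/idealN/coset_repP. Qed.

Definition qadd (a b : quot) := pi (val a + val b).
Definition qopp (a : quot) := pi (- val a).
Definition qmul (a b : quot) := pi (val a * val b).

Let qaddE x y : qadd (pi x) (pi y) = pi (x + y).
Proof. by apply/pi_eqP; rewrite opprD addrACA; apply: idealD; apply: pi_val_sub. Qed.

Let qoppE x : qopp (pi x) = pi (- x).
Proof. by apply/pi_eqP; rewrite -opprD; apply/idealN/pi_val_sub. Qed.

Let qmulE x y : qmul (pi x) (pi y) = pi (x * y).
Proof.
apply/pi_eqP.
have -> : val (pi x) * val (pi y) - x * y =
  val (pi x) * (val (pi y) - y) + (val (pi x) - x) * y by ring.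
by apply: idealD; [apply: idealMl | apply: idealMr]; apply: pi_val_sub.
Qed.

Lemma qaddA : associative qadd.
Proof. by move=> a b c; rewrite -[a]pi_val -[b]pi_val -[c]pi_val !qaddE addrA. Qed.
Lemma qaddC : commutative qadd.
Proof. by move=> a b; rewrite -[a]pi_val -[b]pi_val !qaddE addrC. Qed.
Lemma qadd0 : left_id (pi 0) qadd.
Proof. by move=> a; rewrite -[a]pi_val qaddE add0r. Qed.
Lemma qaddN : left_inverse (pi 0) qopp qadd.
Proof. by move=> a; rewrite -[a]pi_val qoppE qaddE addNr. Qed.
HB.instance Definition _ := GRing.isZmodule.Build quot qaddA qaddC qadd0 qaddN.

Lemma qmulA : associative qmul.
Proof. by move=> a b c; rewrite -[a]pi_val -[b]pi_val -[c]pi_val !qmulE mulrA. Qed.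
Lemma qmulC : commutative qmul.
Proof. by move=> a b; rewrite -[a]pi_val -[b]pi_val !qmulE mulrC. Qed.
Lemma qmul1 : left_id (pi 1) qmul.
Proof. by move=> a; rewrite -[a]pi_val qmulE mul1r. Qed.
Lemma qmulDl : left_distributive qmul (@GRing.add quot).
Proof.
move=> a b c; rewrite -[a]pi_val -[b]pi_val -[c]pi_val.
by rewrite [_ + _]qaddE !qmulE mulrDl -qaddE.
Qed.
HB.instance Definition _ := GRing.Zmodule_isComPzRing.Build quot qmulA qmulC qmul1 qmulDl.

Lemma pi_is_nmod_morphism : nmod_morphism pi.
Proof. by split=> // x y; rewrite -qaddE. Qed.
Lemma pi_is_monoid_morphism : monoid_morphism pi.
Proof. by split=> // x y; rewrite -qmulE. Qed.

Definition qpi : {rmorphism B -> quot} :=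
  HB.pack pi (GRing.isNmodMorphism.Build _ _ _ pi_is_nmod_morphism)
    (GRing.isMonoidMorphism.Build _ _ _ pi_is_monoid_morphism).

Lemma qpi_val (a : quot) : qpi (val a) = a.
Proof. exact: pi_val. Qed.

Lemma qpi_eqP x y : qpi x = qpi y <-> K (x - y).
Proof. exact: pi_eqP. Qed.

Lemma qpi_val_sub x : K (val (qpi x) - x).
Proof. exact: pi_val_sub. Qed.

Lemma qpi_eq0P x : qpi x = 0 <-> K x.
Proof. by rewrite -(rmorph0 qpi) qpi_eqP subr0. Qed.

End Quotient.

Section QuotientMap.
Variables (B : comPzRingType) (K L : ideal B).
Hypothesis KL : forall x, K x -> L x.

Let qmap (a : quot K) : quot L := qpi L (val a).

Let qmap_qpi x : qmap (qpi K x) = qpi L x.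
Proof. by apply/qpi_eqP/KL/qpi_val_sub. Qed.

Lemma quot_map_is_nmod_morphism : nmod_morphism qmap.
Proof.
split=> [|a b]; first by rewrite -(rmorph0 (qpi K)) qmap_qpi rmorph0.
by rewrite -[a]qpi_val -[b]qpi_val -rmorphD !qmap_qpi rmorphD.
Qed.

Lemma quot_map_is_monoid_morphism : monoid_morphism qmap.
Proof.
split=> [|a b]; first by rewrite -(rmorph1 (qpi K)) qmap_qpi rmorph1.
by rewrite -[a]qpi_val -[b]qpi_val -rmorphM !qmap_qpi rmorphM.
Qed.

Definition quot_map : {rmorphism quot K -> quot L} :=
  HB.pack qmap (GRing.isNmodMorphism.Build _ _ _ quot_map_is_nmod_morphism)
    (GRing.isMonoidMorphism.Build _ _ _ quot_map_is_monoid_morphism).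

Lemma quot_map_qpi x : quot_map (qpi K x) = qpi L x.
Proof. exact: qmap_qpi. Qed.

Lemma quot_map_surj (c : quot L) : exists a, quot_map a = c.
Proof. by exists (qpi K (val c)); rewrite quot_map_qpi qpi_val. Qed.

Lemma quot_map_ker_sqr0 : (forall x y, L x -> L y -> K (x * y)) ->
  forall a b, quot_map a = 0 -> quot_map b = 0 -> a * b = 0.
Proof.
move=> LLK a b /qpi_eq0P La /qpi_eq0P Lb.
by rewrite -[a]qpi_val -[b]qpi_val -rmorphM; apply/qpi_eq0P/LLK.
Qed.

End QuotientMap.

Section AddPow.
Variables (B : comPzRingType) (K : ideal B) (c : B).

Definition add_pow_mem j (z : B) := exists p t, K p /\ z = p + c ^+ j * t.

Lemma add_pow_mem0 j : add_pow_mem j 0.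
Proof. by exists 0, 0; rewrite mulr0 addr0; split => //; apply: ideal0. Qed.
Lemma add_pow_memD j x y : add_pow_mem j x -> add_pow_mem j y -> add_pow_mem j (x + y).
Proof.
move=> [p [t [Kp ->]]] [p' [t' [Kp' ->]]]; exists (p + p'), (t + t').
by split; [apply: idealD | ring].
Qed.
Lemma add_pow_memM j a x : add_pow_mem j x -> add_pow_mem j (a * x).
Proof.
move=> [p [t [Kp ->]]]; exists (a * p), (a * t).
by split; [apply: idealMl | ring].
Qed.

Definition add_pow j : ideal B :=
  Ideal (add_pow_mem0 j) (@add_pow_memD j) (@add_pow_memM j).

Lemma sub_add_pow j x : K x -> add_pow j x.
Proof. by exists x, 0; rewrite mulr0 addr0. Qed.

Lemma add_pow0 x : add_pow 0 x.
Proof. by exists 0, x; rewrite expr0 mul1r add0r; split => //; apply: ideal0. Qed.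

Lemma add_powS j x : add_pow j.+1 x -> add_pow j x.
Proof. by move=> [p [t [Kp ->]]]; exists p, (c * t); rewrite exprSr -mulrA. Qed.

Lemma add_powMc j x : add_pow j x -> add_pow j.+1 (c * x).
Proof.
move=> [p [t [Kp ->]]]; exists (c * p), t.
by split; [apply: idealMl | rewrite exprS; ring].
Qed.

Lemma add_pow_sub_ideal j x : K (c ^+ j) -> add_pow j x -> K x.
Proof. by move=> Kcj [p [t [Kp ->]]]; apply: idealD => //; apply: idealMr. Qed.

End AddPow.

Lemma add_pow_rmorph (B B' : comPzRingType) (f : {rmorphism B -> B'})
    (K : ideal B) (K' : ideal B') (c : B) j x :
  (forall y, K y -> K' (f y)) -> add_pow K c j x -> add_pow K' (f c) j (f x).
Proof.
move=> KK' [p [t [Kp ->]]]; exists (f p), (f t).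
by rewrite rmorphD rmorphM rmorphXn; split => //; apply: KK'.
Qed.

Section IdealPow.
Variables (A : comNzRingType) (I : A -> Prop).

Lemma ideal_pow0 n : ideal_pow I n 0.
Proof. by case: n => [|n] //=; exists [::]; rewrite big_nil. Qed.

Lemma ideal_powD n x y : ideal_pow I n x -> ideal_pow I n y -> ideal_pow I n (x + y).
Proof.
case: n => [|n] //= [s [Is ->]] [s' [Is' ->]]; exists (s ++ s'); rewrite big_cat.
by split=> // p; rewrite mem_cat => /orP [/Is | /Is'].
Qed.

Lemma ideal_powMl n a x : ideal_pow I n x -> ideal_pow I n (a * x).
Proof.
elim: n a x => [|n IHn] a x //= [s [Is ->]].
exists [seq (a * p.1, p.2) | p <- s]; split.
  by move=> _ /mapP [p /Is [Ip1 Ip2] ->]; split => //; apply: IHn.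
by rewrite big_map mulr_sumr; apply: eq_bigr => p _; rewrite mulrA.
Qed.

Definition ideal_pow_ideal n : ideal A :=
  Ideal (ideal_pow0 n) (@ideal_powD n) (@ideal_powMl n).

Lemma ideal_powS n x : ideal_pow I n.+1 x -> ideal_pow I n x.
Proof.
move=> /= [s [Is ->]].
apply: (ideal_sum (K := ideal_pow_ideal n) (F := fun p : A * A => p.1 * p.2)) => p /Is [In _].
exact: idealMr.
Qed.

Lemma ideal_pow_le m n x : (m <= n)%N -> ideal_pow I n x -> ideal_pow I m x.
Proof.
move=> /subnK <-; elim: (n - m)%N => [|k IHk] // Ix.
by apply/IHk/ideal_powS; rewrite -addSn.
Qed.

Lemma ideal_powSM n x y : ideal_pow I n x -> I y -> ideal_pow I n.+1 (x * y).
Proof. by move=> Inx Iy; exists [:: (x, y)]; rewrite big_seq1; split => // p /[1!inE] /eqP ->. Qed.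

End IdealPow.

Section ExtIdeal.
Variables (A A' : comNzRingType) (f : A -> A') (P : A -> Prop).

Lemma ext_ideal0 : ext_ideal f P 0.
Proof. by exists [::]; rewrite big_nil. Qed.

Lemma ext_idealD x y : ext_ideal f P x -> ext_ideal f P y -> ext_ideal f P (x + y).
Proof.
move=> [s [Ps ->]] [s' [Ps' ->]]; exists (s ++ s'); rewrite big_cat.
by split=> // p; rewrite mem_cat => /orP [/Ps | /Ps'].
Qed.

Lemma ext_idealMl a x : ext_ideal f P x -> ext_ideal f P (a * x).
Proof.
move=> [s [Ps ->]]; exists [seq (p.1, a * p.2) | p <- s]; split.
  by move=> _ /mapP [p /Ps Pp ->].
by rewrite big_map mulr_sumr; apply: eq_bigr => p _; rewrite mulrCA.
Qed.

Definition ext_ideal_ideal : ideal A' := Ideal ext_ideal0 ext_idealD ext_idealMl.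

Lemma ext_ideal_img a : P a -> ext_ideal f P (f a).
Proof.
by move=> Pa; exists [:: (a, 1)]; rewrite big_seq1 mulr1; split => // p /[1!inE] /eqP ->.
Qed.

Lemma ext_ideal_sub (Q : A -> Prop) y :
  (forall a, P a -> Q a) -> ext_ideal f P y -> ext_ideal f Q y.
Proof. by move=> PQ [s [Ps ->]]; exists s; split=> // p /Ps /PQ. Qed.

Lemma rmorph_ext_ideal_eq0 (C : comPzRingType) (g : {rmorphism A' -> C}) y :
  (forall a, P a -> g (f a) = 0) -> ext_ideal f P y -> g y = 0.
Proof.
move=> gfP [s [Ps ->]]; rewrite rmorph_sum big1_seq // => p /Ps Pp.
by rewrite rmorphM gfP ?mul0r.
Qed.

End ExtIdeal.

(** * The ring B[eps]/(eps^2 - al eps) *)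

(* The pair (x, y) stands for x + y eps. *)
Definition alpha_dual (B : comPzRingType) (al : B) := (B * B)%type.
HB.instance Definition _ (B : comPzRingType) (al : B) :=
  GRing.Zmodule.on (alpha_dual al).

Section AlphaDual.
Variables (B : comPzRingType) (al : B).

Definition dual_mul (u v : alpha_dual al) : alpha_dual al :=
  (u.1 * v.1, u.2 * v.1 + u.1 * v.2 + al * u.2 * v.2).

Lemma dual_mulA : associative dual_mul.
Proof. by move=> [a b] [c e] [g h]; congr pair => /=; ring. Qed.
Lemma dual_mulC : commutative dual_mul.
Proof. by move=> [a b] [c e]; congr pair => /=; ring. Qed.
Lemma dual_mul1 : left_id ((1, 0) : alpha_dual al) dual_mul.
Proof. by move=> [a b]; congr pair => /=; ring. Qed.
Lemma dual_mulDl : left_distributive dual_mul (@GRing.add (alpha_dual al)).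
Proof. by move=> [a b] [c e] [g h]; congr pair => /=; ring. Qed.
HB.instance Definition _ :=
  GRing.Zmodule_isComPzRing.Build (alpha_dual al) dual_mulA dual_mulC dual_mul1 dual_mulDl.

Lemma alpha_dualM (u v : alpha_dual al) :
  u * v = (u.1 * v.1, u.2 * v.1 + u.1 * v.2 + al * u.2 * v.2).
Proof. by []. Qed.

Section DualIdeal.
Variables (K1 K2 : ideal B).
Hypothesis K12 : forall x, K1 x -> K2 x.

Definition dual_ideal_mem (u : alpha_dual al) := K1 u.1 /\ K2 u.2.

Lemma dual_ideal_mem0 : dual_ideal_mem 0.
Proof. by split; apply: ideal0. Qed.
Lemma dual_ideal_memD u v :
  dual_ideal_mem u -> dual_ideal_mem v -> dual_ideal_mem (u + v).
Proof. by move=> [? ?] [? ?]; split; apply: idealD. Qed.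
Lemma dual_ideal_memM a u : dual_ideal_mem u -> dual_ideal_mem (a * u).
Proof.
move=> [K1u K2u]; split; first exact: idealMl.
rewrite /= -mulrA; apply: idealD; last by do 2 apply: idealMl.
by apply: idealD; apply: idealMl => //; apply: K12.
Qed.

Definition dual_ideal : ideal (alpha_dual al) :=
  Ideal dual_ideal_mem0 dual_ideal_memD dual_ideal_memM.

Lemma qpi_dual_eqP x u v :
  qpi dual_ideal ((x, u) : alpha_dual al) = qpi dual_ideal (x, v) <-> K2 (u - v).
Proof.
rewrite qpi_eqP; split=> [[] //|K2e]; split => //=.
by rewrite subrr; apply: ideal0.
Qed.

Section GraphMod.
Variable e : B -> B.
Hypothesis eD : forall x y, K2 (e (x + y) - (e x + e y)).
Hypothesis eM : forall x y, K2 (e (x * y) - (e x * y + x * e y + al * e x * e y)).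
Hypothesis e1 : K2 (e 1).

Lemma graph_mod_is_nmod_morphism : nmod_morphism (fun y => qpi dual_ideal (y, e y)).
Proof.
split=> [|x y]; cbv beta; last by rewrite -rmorphD; apply/qpi_dual_eqP.
apply/qpi_eq0P; split; first exact: ideal0.
by have := idealN (eD 0 0); rewrite addr0 opprB addrK.
Qed.

Lemma graph_mod_is_monoid_morphism : monoid_morphism (fun y => qpi dual_ideal (y, e y)).
Proof.
split=> [|x y]; cbv beta; last by rewrite -rmorphM; apply/qpi_dual_eqP.
rewrite -(rmorph1 (qpi _)); apply/qpi_eqP; split => /=.
  by rewrite subrr; apply: ideal0.
by rewrite subr0.
Qed.

Definition graph_mod : {rmorphism B -> quot dual_ideal} :=
  HB.pack (fun y => qpi dual_ideal (y, e y))
    (GRing.isNmodMorphism.Build _ _ _ graph_mod_is_nmod_morphism)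
    (GRing.isMonoidMorphism.Build _ _ _ graph_mod_is_monoid_morphism).

End GraphMod.

Section RmorphismGraph.
Variable w : {rmorphism B -> quot dual_ideal}.
Hypothesis w1 : forall y, K1 ((val (w y)).1 - y).

Definition rmorph_graph (y : B) : B := (val (w y)).2.

Lemma rmorph_graphE y : w y = qpi dual_ideal (y, rmorph_graph y).
Proof.
rewrite -[w y]qpi_val; apply/qpi_eqP; split; first exact: w1.
by rewrite /= subrr; apply: ideal0.
Qed.

Lemma rmorph_graphD x y : K2 (rmorph_graph (x + y) - (rmorph_graph x + rmorph_graph y)).
Proof.
apply/(qpi_dual_eqP (x + y)).
by rewrite -[LHS]rmorph_graphE rmorphD !rmorph_graphE -rmorphD.
Qed.

Lemma rmorph_graphM x y :
  K2 (rmorph_graph (x * y) - (rmorph_graph x * y + x * rmorph_graph y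
                              + al * rmorph_graph x * rmorph_graph y)).
Proof.
apply/(qpi_dual_eqP (x * y)).
by rewrite -[LHS]rmorph_graphE rmorphM !rmorph_graphE -rmorphM.
Qed.

End RmorphismGraph.
End DualIdeal.

Lemma dual_ideal_sqr_add_pow (K : ideal B) j u v :
  dual_ideal_mem K (add_pow K al j) u -> dual_ideal_mem K (add_pow K al j) v ->
  dual_ideal_mem K (add_pow K al j.+1) (u * v).
Proof.
move=> [Ku1 Mu2] [Kv1 Mv2]; split; first exact: idealMl.
rewrite alpha_dualM; apply: idealD; last by apply: idealMr; apply: add_powMc.
by apply: idealD; apply: sub_add_pow; [apply: idealMl | apply: idealMr].
Qed.

End AlphaDual.


Section DualMap.
Variables (B B' : comPzRingType) (f : {rmorphism B -> B'}) (al : B).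

Definition dual_map (u : alpha_dual al) : alpha_dual (f al) := (f u.1, f u.2).

Lemma dual_map_is_nmod_morphism : nmod_morphism dual_map.
Proof. by split=> [|u v]; rewrite /dual_map /= ?rmorph0 ?rmorphD. Qed.
Lemma dual_map_is_monoid_morphism : monoid_morphism dual_map.
Proof.
split=> [|u v]; first by rewrite /dual_map /= rmorph0 rmorph1.
by rewrite /dual_map !alpha_dualM /= !(rmorphD, rmorphM).
Qed.

HB.instance Definition _ := GRing.isNmodMorphism.Build _ _ dual_map
  dual_map_is_nmod_morphism.
HB.instance Definition _ := GRing.isMonoidMorphism.Build _ _ dual_map
  dual_map_is_monoid_morphism.

End DualMap.

(** * Alpha-derivations *)

Section AlphaDerivation.
Variables (R : comPzRingType) (A : comAlgType R) (alpha : A) (d : A -> A).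
Hypothesis dP : is_alpha_derivation alpha d.

Lemma derivD x y : d (x + y) = d x + d y.
Proof. by case: dP => dZ _ _; have := dZ 1 x y; rewrite !scale1r. Qed.
Lemma deriv0 : d 0 = 0.
Proof. by apply: (addrI (d 0)); rewrite -derivD !addr0. Qed.
Lemma deriv1 : d 1 = 0.
Proof. by case: dP. Qed.
Lemma derivM x y : d (x * y) = d x * y + x * d y + alpha * d x * d y.
Proof. by case: dP. Qed.
Lemma deriv_sum (T : Type) (s : seq T) (F : T -> A) :
  d (\sum_(p <- s) F p) = \sum_(p <- s) d (F p).
Proof. exact: (big_morph d derivD deriv0). Qed.

Lemma deriv_graph_is_nmod_morphism : nmod_morphism (fun x : A => (x, d x) : alpha_dual alpha).
Proof. by split=> [|x y]; rewrite ?deriv0 ?derivD. Qed.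
Lemma deriv_graph_is_monoid_morphism : monoid_morphism (fun x : A => (x, d x) : alpha_dual alpha).
Proof. by split=> [|x y]; rewrite ?deriv1 ?derivM. Qed.

Definition deriv_graph : {rmorphism A -> alpha_dual alpha} :=
  HB.pack (fun x : A => (x, d x) : alpha_dual alpha)
    (GRing.isNmodMorphism.Build _ _ _ deriv_graph_is_nmod_morphism)
    (GRing.isMonoidMorphism.Build _ _ _ deriv_graph_is_monoid_morphism).

Lemma deriv_scale1 r : d (r *: 1) = 0.
Proof. by case: dP => dZ d1 _; have := dZ r 1 0; rewrite addr0 d1 scaler0 deriv0 addr0. Qed.

Variable I : A -> Prop.

(* In d(xy) = d(x)y + x d(y) + alpha d(x) d(y), each term either keeps a
   factor of I or gains a factor alpha. *)
Lemma deriv_ideal_pow m j a :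
  ideal_pow I (m + j) a -> add_pow (ideal_pow_ideal I m) alpha j (d a).
Proof.
move mjN: (m + j)%N => N; elim: N m j a mjN => [|N IHN] m j a.
  by case: m j => [|m] [|j] // _ _; apply: add_pow0.
move=> mjN /= [s [Is ->]]; rewrite deriv_sum.
apply: (ideal_sum (K := add_pow _ _ j) (F := fun p : A * A => d (p.1 * p.2))) => p /Is [Ip1 Ip2].
case: j mjN => [|j] mjN; first exact: add_pow0.
rewrite derivM; apply: idealD; first apply: idealD.
- case: m mjN => [|m] mjN; first by apply: sub_add_pow.
  have [q [t [Iq ->]]] := IHN m j.+1 _ (succn_inj mjN) Ip1.
  exists (q * p.2), (t * p.2); split; first exact: ideal_powSM.
  by ring.
- apply/idealMr/sub_add_pow/(ideal_pow_le (n := N)) => //.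
  by move: mjN; rewrite addnS => -[<-]; apply: leq_addr.
- apply/idealMr/add_powMc/(IHN m j) => //.
  by move: mjN; rewrite addnS => -[].
Qed.

End AlphaDerivation.

Lemma is_alpha_derivation_intro (R : comPzRingType) (A : comAlgType R) (alpha : A)
    (d : A -> A) :
  (forall x y, d (x + y) = d x + d y) ->
  (forall x y, d (x * y) = d x * y + x * d y + alpha * d x * d y) ->
  (forall r, d (r *: 1) = 0) -> is_alpha_derivation alpha d.
Proof.
move=> dD dM dZ1; split=> [r x y | | //]; last by rewrite -[1](scale1r 1) dZ1.
by rewrite dD -mulr_algl dM dZ1 !(mulr0, mul0r, addr0, add0r) mulr_algl.
Qed.

(** * Lifting along an adically etale map *)

Section Lifting.
Variables (R : comPzRingType) (A A' : comAlgType R) (I : A -> Prop)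
  (f : {lrmorphism A -> A'}) (alpha : A) (d : A -> A).
Hypothesis dP : is_alpha_derivation alpha d.

Local Notation al := (f alpha).
Local Notation J n := (ext_ideal_ideal f (ideal_pow I n)).

Record lift_mod (K : ideal A') (e : A' -> A') : Prop := LiftMod {
  lift_modD : forall x y, K (e (x + y) - (e x + e y));
  lift_modM : forall x y, K (e (x * y) - (e x * y + x * e y + al * e x * e y));
  lift_mod_f : forall a, K (e (f a) - f (d a)) }.

Lemma lift_mod_sub (K L : ideal A') e :
  (forall x, K x -> L x) -> lift_mod K e -> lift_mod L e.
Proof. by move=> KL [eD eM ef]; split=> *; apply: KL. Qed.

Lemma lift_mod1 K e : lift_mod K e -> K (e 1).
Proof. by case=> _ _ /(_ 1); rewrite rmorph1 (deriv1 dP) rmorph0 subr0. Qed.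

Lemma lift_mod_congr (K : ideal A') e e' :
  lift_mod K e -> (forall y, K (e' y - e y)) -> lift_mod K e'.
Proof.
move=> [eD eM ef] e'e; have E y : qpi K (e' y) = qpi K (e y) by apply/qpi_eqP.
split=> [x y | x y | a]; apply/qpi_eqP;
  rewrite ?rmorphD ?rmorphM !E -?rmorphM -?rmorphD; apply/qpi_eqP.
- exact: eD.
- exact: eM.
- exact: ef.
Qed.

Lemma lift_mod_exact (K : ideal A') e :
  (forall x y, e (x + y) = e x + e y) ->
  (forall x y, e (x * y) = e x * y + x * e y + al * e x * e y) ->
  (forall a, e (f a) = f (d a)) -> lift_mod K e.
Proof. by move=> eD eM ef; split=> *; rewrite ?eD ?eM ?ef subrr; apply: ideal0. Qed.

Local Notation M n j := (add_pow (J n) al j).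

Local Notation JM n j := (dual_ideal al (@sub_add_pow _ (J n) al j)).
Local Notation C n j := (quot (JM n j)).

Lemma dual_idealS n j u : JM n j.+1 u -> JM n j u.
Proof. by case=> J1 M2; split => //; apply: add_powS. Qed.

Local Notation proj n j := (quot_map (@dual_idealS n j)).

Definition dual_deriv n j : {rmorphism A -> C n j} :=
  qpi (JM n j) \o @dual_map _ _ f alpha \o deriv_graph dP.

Lemma dual_deriv_eq0 n j N a :
  (n + j <= N)%N -> ideal_pow I N a -> dual_deriv n j a = 0.
Proof.
move=> njN /(ideal_pow_le njN) Ia; apply/qpi_eq0P; split.
  by apply: ext_ideal_img; apply: (ideal_pow_le _ Ia); apply: leq_addr.
apply: add_pow_rmorph (deriv_ideal_pow dP Ia) => x.
exact: ext_ideal_img.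
Qed.

Lemma proj_dual_deriv n j a : proj n j (dual_deriv n j.+1 a) = dual_deriv n j a.
Proof. exact: quot_map_qpi. Qed.

Section Graph.
Variables (n j : nat) (e : A' -> A').
Hypothesis eP : lift_mod (M n j) e.

Definition lift_graph : {rmorphism A' -> C n j} :=
  graph_mod (@sub_add_pow _ (J n) al j) (lift_modD eP) (lift_modM eP) (lift_mod1 eP).

Lemma lift_graph_f a : lift_graph (f a) = dual_deriv n j a.
Proof. exact/qpi_dual_eqP/(lift_mod_f eP). Qed.

Lemma lift_graph_eq0 N y : (n + j <= N)%N -> J N y -> lift_graph y = 0.
Proof.
move=> njN; apply: rmorph_ext_ideal_eq0 => a Ia.
by rewrite lift_graph_f; apply: dual_deriv_eq0 Ia.
Qed.

End Graph.

Lemma lift_graph_eqP n j e e' (eP : lift_mod (M n j) e)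
    (e'P : lift_mod (M n j) e') y :
  lift_graph eP y = lift_graph e'P y <-> M n j (e y - e' y).
Proof. exact: qpi_dual_eqP. Qed.

Lemma lift_modS n j e : lift_mod (M n j.+1) e -> lift_mod (M n j) e.
Proof. exact/lift_mod_sub/add_powS. Qed.

Lemma proj_lift_graph n j e (eP : lift_mod (M n j.+1) e) y :
  proj n j (lift_graph eP y) = lift_graph (lift_modS eP) y.
Proof. exact: quot_map_qpi. Qed.

Hypothesis f_etale : forall n, (1 <= n)%N -> formally_etale_mod f I n.

Lemma etale_lift_graph n j e (eP : lift_mod (M n j) e) :
  exists w : {rmorphism A' -> C n j.+1},
    [/\ forall y, proj n j (w y) = lift_graph eP y,
        forall a, w (f a) = dual_deriv n j.+1 a &
        forall w' : {rmorphism A' -> C n j.+1},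
          (forall y, proj n j (w' y) = lift_graph eP y) ->
          (forall a, w' (f a) = dual_deriv n j.+1 a) -> forall y, w' y = w y].
Proof.
have njN : (n + j <= n + j.+1)%N by rewrite addnS.
have sqr0 := quot_map_ker_sqr0 (KL := @dual_idealS n j) (@dual_ideal_sqr_add_pow _ al (J n) j).
have compat a : proj n j (dual_deriv n j.+1 a) = lift_graph eP (f a).
  by rewrite proj_dual_deriv lift_graph_f.
have [|w [_ wv wu wuniq]] := @f_etale (n + j.+1) _ _ _ _ (quot_map_surj _) sqr0
  _ (lift_graph eP) (fun a => dual_deriv_eq0 (leqnn _)) (fun y => lift_graph_eq0 eP njN) compat.
  by rewrite addnS.
exists w; split=> // w' w'v w'u; apply: wuniq => // y.
by apply: rmorph_ext_ideal_eq0 => a Ia; rewrite w'u (dual_deriv_eq0 (leqnn _)).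
Qed.

Lemma lift_mod_exists n j : exists e, lift_mod (M n j) e.
Proof.
elim: j => [|j [e eP]]; first by exists (fun=> 0); split=> *; apply: add_pow0.
have [w [wv wu _]] := etale_lift_graph eP.
have w1 y : J n ((val (w y)).1 - y) by have /qpi_eqP [] := wv y.
exists (rmorph_graph w); split; [exact: rmorph_graphD w1 | exact: rmorph_graphM w1 |].
by move=> a; have := wu a; rewrite (rmorph_graphE w1) => /qpi_dual_eqP.
Qed.

Lemma lift_mod_unique n j e1 e2 :
  lift_mod (M n j) e1 -> lift_mod (M n j) e2 -> forall y, M n j (e1 y - e2 y).
Proof.
elim: j e1 e2 => [|j IHj] e1 e2 e1P e2P y; first exact: add_pow0.
(* By induction both graphs lift the graph of [e1] modulo [M n j]. *)
have [w [_ _ wuniq]] := etale_lift_graph (lift_modS e1P).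
apply/(lift_graph_eqP e1P e2P).
rewrite (wuniq (lift_graph e1P)) ?(wuniq (lift_graph e2P)) // => [z|a|z|a];
  rewrite ?lift_graph_f ?proj_lift_graph //.
by apply/lift_graph_eqP/IHj; apply: lift_modS.
Qed.

Hypothesis alpha_nil : adically_nilpotent I alpha.

Lemma lift_mod_J_exists n : exists e, lift_mod (J n) e.
Proof.
have [k Ik] := alpha_nil n; have [e eP] := lift_mod_exists n k.
exists e; apply: lift_mod_sub eP => x; apply: add_pow_sub_ideal.
by rewrite -rmorphXn; apply: ext_ideal_img.
Qed.

Lemma lift_mod_J_unique n e1 e2 :
  lift_mod (J n) e1 -> lift_mod (J n) e2 -> forall y, J n (e1 y - e2 y).
Proof.
have [k Ik] := alpha_nil n => e1P e2P y.
apply: (add_pow_sub_ideal (c := al) (j := k)); first by rewrite -rmorphXn; apply: ext_ideal_img.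
by apply: lift_mod_unique; apply: lift_mod_sub (@sub_add_pow _ _ _ _) _.
Qed.

Hypothesis complete : adically_complete f I.
Hypothesis separated : adically_separated f I.

Lemma eq_adic u v : (forall n, J n (u - v)) -> u = v.
Proof. by move=> Juv; apply/eqP; rewrite -subr_eq0; apply/eqP/separated. Qed.

Definition lift_J n : A' -> A' :=
  sval (constructive_indefinite_description _ (lift_mod_J_exists n)).

Lemma lift_JP n : lift_mod (J n) (lift_J n).
Proof. exact: svalP (constructive_indefinite_description _ (lift_mod_J_exists n)). Qed.

Lemma lift_J_cauchy y n : J n (lift_J n.+1 y - lift_J n y).
Proof.
apply: lift_mod_J_unique (lift_JP n) y.
by apply: lift_mod_sub (lift_JP n.+1) => x; apply/ext_ideal_sub/ideal_powS.
Qed.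

Definition lift_deriv (y : A') : A' :=
  sval (constructive_indefinite_description _ (complete (lift_J_cauchy y))).

Lemma lift_mod_lift_deriv n : lift_mod (J n) lift_deriv.
Proof.
apply: lift_mod_congr (lift_JP n) _ => y.
exact: svalP (constructive_indefinite_description _ (complete (lift_J_cauchy y))) n.
Qed.

Lemma lift_derivD x y : lift_deriv (x + y) = lift_deriv x + lift_deriv y.
Proof. by apply: eq_adic => n; apply: lift_modD (lift_mod_lift_deriv n) x y. Qed.

Lemma lift_derivM x y : lift_deriv (x * y) =
  lift_deriv x * y + x * lift_deriv y + al * lift_deriv x * lift_deriv y.
Proof. by apply: eq_adic => n; apply: lift_modM (lift_mod_lift_deriv n) x y. Qed.

Lemma lift_deriv_f a : lift_deriv (f a) = f (d a).
Proof. by apply: eq_adic => n; apply: lift_mod_f (lift_mod_lift_deriv n) a. Qed.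

Lemma lift_deriv_unique e :
  (forall x y, e (x + y) = e x + e y) ->
  (forall x y, e (x * y) = e x * y + x * e y + al * e x * e y) ->
  (forall a, e (f a) = f (d a)) -> forall y, e y = lift_deriv y.
Proof.
move=> eD eM ef y; apply: eq_adic => n.
exact: lift_mod_J_unique (lift_mod_exact _ eD eM ef) (lift_mod_lift_deriv n) y.
Qed.

End Lifting.

Theorem proposition5p12 (R : comPzRingType) (A A' : comAlgType R)
    (I : A -> Prop) (f : {lrmorphism A -> A'}) (alpha : A) :
  is_ideal I ->
  adically_complete f I -> adically_separated f I ->
  (forall n, (1 <= n)%N -> etale_mod f I n) ->
  adically_nilpotent I alpha ->
  forall d : A -> A, is_alpha_derivation alpha d ->
  exists d' : A' -> A',
    [/\ is_alpha_derivation (f alpha) d',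
        (forall x : A, d' (f x) = f (d x)) &
        (forall d'' : A' -> A', is_alpha_derivation (f alpha) d'' ->
           (forall x : A, d'' (f x) = f (d x)) -> forall y, d'' y = d' y)].
Proof.
move=> _ complete separated etale nil d dP.
have f_etale n (n_gt0 : (1 <= n)%N) := (etale n n_gt0).1.
pose d' := lift_deriv dP f_etale nil complete.
have d'f : forall a, d' (f a) = f (d a) := lift_deriv_f dP f_etale nil complete separated.
exists d'; split=> //.
- apply: is_alpha_derivation_intro => [||r].
  + exact: lift_derivD separated.
  + exact: lift_derivM separated.
  + by rewrite -(rmorph_alg f) d'f (congr1 f (deriv_scale1 dP r)) rmorph0.
- move=> e eP ef; apply: (lift_deriv_unique _ _ _ _ separated) => //.
  + exact: derivD eP.
  + exact: derivM eP.
Qed.
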